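(* Let $X,X_H$ be real Hilbert spaces, $I_h^H\in\mathbb{L}(X;X_H)$, and $I_H^h\in\mathbb{L}(X_H;X)$ with $\mu I_H^h=(I_h^H)^*$ for some $\mu>0$. Let $F:X\to\mathbb{R}$ be Fréchet differentiable and $G:X\to\mathbb{R}\cup\{+\infty\}$ convex, proper, lower semicontinuous, and $x^k\in X$. Let $F_H:X_H\to\mathbb{R}$ be convex with $L_H$-Lipschitz gradient, $G_H^k:X_H\to\mathbb{R}\cup\{+\infty\}$ convex, proper, lower semicontinuous, and $\tau_H>0$ with $\epsilon:=2-\tau_HL_H>0$. Let $\zeta^{k,0}\in X_H$ satisfy the nonsmooth coherence condition $I_h^H\partial G(x^k)\subseteq\partial G_H^k(\zeta^{k,0})$. Define $w_H^k:=I_h^H\nabla F(x^k)-\nabla F_H(\zeta^{k,0})$, $F_H^k(\zeta):=F_H(\zeta)+\langle w_H^k,\zeta-\zeta^{k,0}\rangle$, and $\zeta^{k,j+1}:=\operatorname{prox}_{\tau_H G_H^k}(\zeta^{k,j}-\tau_H\nabla F_H^k(\zeta^{k,j}))$ for $j=0,\dots,m-1$. Let $d:=I_H^h(\zeta^{k,m}-\zeta^{k,0})$. Then $$\sup_{g\in\partial G(x^k)}\langle g+\nabla F(x^k),d\rangle\le-\frac{\epsilon}{2\mu\tau_H}\sum_{j=0}^{m-1}\|\zeta^{k,j+1}-\zeta^{k,j}\|^2\le 0.$$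
   Context: $I_h^H$ is called the restriction and $I_H^h$ the prolongation operator. $I_h^H\partial G(x^k):=\{I_h^Hg: g\in\partial G(x^k)\}$. The supremum over the empty set is $-\infty$. $\operatorname{prox}$ is the proximal operator. *)

From HB Require Import structures.
From mathcomp Require Import all_boot all_order all_algebra.
From mathcomp Require Import all_classical all_reals all_analysis.
Set Implicit Arguments. Unset Strict Implicit. Unset Printing Implicit Defensive.
Import Order.TTheory GRing.Theory Num.Theory.
Import numFieldNormedType.Exports.
Local Open Scope classical_set_scope.
Local Open Scope ring_scope.

(* ip is a (real) inner product on V inducing the norm of V.
   A real Hilbert space is a complete normed space V together with such ip. *)
Definition inner_product (R : realType) (V : normedModType R) (ip : V -> V -> R) :=
  [/\ (forall x y, ip x y = ip y x),
      (forall (a : R) x y z, ip (a *: x + y) z = a * ip x z + ip y z)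
    & (forall x, ip x x = `|x| ^+ 2)].

Definition is_adjoint (R : realType) (V W : normedModType R)
  (ipV : V -> V -> R) (ipW : W -> W -> R) (A : V -> W) (B : W -> V) :=
  forall x y, ipW (A x) y = ipV x (B y).

Definition is_gradient (R : realType) (V : normedModType R)
  (ip : V -> V -> R) (F : V -> R) (gradF : V -> V) :=
  forall x, differentiable F x /\ forall h, 'd F x h = ip (gradF x) h.

Definition convex_fun (R : realType) (V : normedModType R) (F : V -> R) :=
  forall x y (t : R), 0 <= t <= 1 ->
    F (t *: x + (1 - t) *: y) <= t * F x + (1 - t) * F y.

Local Open Scope ereal_scope.

Definition convex_efun (R : realType) (V : normedModType R) (G : V -> \bar R) :=
  (forall x, G x != -oo) /\
  forall x y (t : R), (0 < t < 1)%R ->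
    G (t *: x + (1 - t) *: y)%R <= t%:E * G x + (1 - t)%:E * G y.

Definition proper_efun (R : realType) (V : normedModType R) (G : V -> \bar R) :=
  (forall x, G x != -oo) /\ exists x, G x < +oo.

Definition subdiff (R : realType) (V : normedModType R) (ip : V -> V -> R)
  (G : V -> \bar R) (x : V) : set V :=
  [set g | G x \is a fin_num /\ forall y, G x + (ip g (y - x)%R)%:E <= G y].

Definition is_prox (R : realType) (V : normedModType R) (tau : R)
  (G : V -> \bar R) (v p : V) :=
  forall z, tau%:E * G p + ((2%:R)^-1 * `|(p - v)%R| ^+ 2)%:E
            <= tau%:E * G z + ((2%:R)^-1 * `|(z - v)%R| ^+ 2)%:E.

(* The coarse iterates are proximal gradient steps for the model F_H^k + G_H^k,
   so by the descent lemma and the variational inequality of the prox each step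
   decreases the model by at least (epsilon / (2 tau_H)) ||zeta^{k,j+1} - zeta^{k,j}||^2.
   On the other hand, for g in dG(x^k), coherence makes I_h^H g a subgradient of
   G_H^k at zeta^{k,0}, and the first-order correction w_H^k is chosen so that
   grad F_H^k(zeta^{k,0}) + I_h^H g = I_h^H (g + grad F(x^k)).  By convexity the
   total decrease is therefore at least <I_h^H (g + grad F(x^k)), zeta^{k,m} - zeta^{k,0}>,
   which is mu <g + grad F(x^k), d> by adjointness. *)
From HB Require Import structures.
From mathcomp Require Import all_boot all_order all_algebra.
From mathcomp Require Import all_classical all_reals all_analysis.
From mathcomp Require Import ring lra.
Import Order.TTheory GRing.Theory Num.Theory.
Import numFieldNormedType.Exports.
Local Open Scope classical_set_scope.
Local Open Scope ring_scope.
Set Implicit Arguments. Unset Strict Implicit.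

Section InnerProduct.
Variables (R : realType) (V : normedModType R) (ip : V -> V -> R).
Hypothesis hip : inner_product ip.

Lemma ipC x y : ip x y = ip y x.
Proof. by case: hip. Qed.

Lemma ipxx x : ip x x = `|x| ^+ 2.
Proof. by case: hip. Qed.

Lemma ip0l z : ip 0 z = 0.
Proof.
case: hip => _ /(_ 1 0 0 z); rewrite scaler0 addr0 mul1r => /eqP.
by rewrite -subr_eq subrr eq_sym => /eqP.
Qed.

Lemma ipDl x y z : ip (x + y) z = ip x z + ip y z.
Proof. by case: hip => _ /(_ 1 x y z); rewrite scale1r mul1r. Qed.

Lemma ipZl a x z : ip (a *: x) z = a * ip x z.
Proof. by case: hip => _ /(_ a x 0 z); rewrite addr0 ip0l addr0. Qed.

Lemma ipNl x z : ip (- x) z = - ip x z.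
Proof. by rewrite -scaleN1r ipZl mulN1r. Qed.

Lemma ipBl x y z : ip (x - y) z = ip x z - ip y z.
Proof. by rewrite ipDl ipNl. Qed.

Lemma ip0r z : ip z 0 = 0.
Proof. by rewrite ipC ip0l. Qed.

Lemma ipDr x y z : ip z (x + y) = ip z x + ip z y.
Proof. by rewrite ipC ipDl !(ipC z). Qed.

Lemma ipZr a x z : ip z (a *: x) = a * ip z x.
Proof. by rewrite ipC ipZl ipC. Qed.

Lemma ipNr x z : ip z (- x) = - ip z x.
Proof. by rewrite ipC ipNl ipC. Qed.

Lemma ipBr x y z : ip z (x - y) = ip z x - ip z y.
Proof. by rewrite ipDr ipNr. Qed.

Lemma normB_sqr x y : `|x - y| ^+ 2 = `|x| ^+ 2 - 2 * ip x y + `|y| ^+ 2.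
Proof. by rewrite -!ipxx ipBl !ipBr (ipC y x); lra. Qed.

Lemma normD_sqr x y : `|x + y| ^+ 2 = `|x| ^+ 2 + 2 * ip x y + `|y| ^+ 2.
Proof. by rewrite -[y]opprK normB_sqr ipNr normrN opprK; lra. Qed.

(* Cauchy-Schwarz, from the expansion of || |y| x - |x| y ||^2 >= 0. *)
Lemma ip_le_norm x y : ip x y <= `|x| * `|y|.
Proof.
have [->|x0] := eqVneq x 0; first by rewrite ip0l normr0 mul0r.
have [->|y0] := eqVneq y 0; first by rewrite ip0r normr0 mulr0.
have nxy : 0 < `|x| * `|y| by rewrite mulr_gt0 // normr_gt0.
have := sqr_ge0 (`|(`|y| *: x - `|x| *: y)|).
rewrite normB_sqr ipZl ipZr !normrZ !normr_id => sq_ge0.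
by rewrite -(ler_pM2l nxy); nra.
Qed.

Lemma ip_ext x y : (forall u, ip x u = ip y u) -> x = y.
Proof.
move=> xy; apply/eqP; rewrite -subr_eq0 -normr_eq0 -sqrf_eq0 -ipxx.
by rewrite ipBl xy -ipBl subrr ip0l.
Qed.

End InnerProduct.

Section Gradient.
Variables (R : realType) (V : normedModType R) (ip : V -> V -> R).
Variables (f : V -> R) (g : V -> V).
Hypothesis hf : is_gradient ip f g.

Lemma is_derive_line x v t :
  is_derive t (1 : R) (fun s => f (x + s *: v)) (ip (g (x + t *: v)) v).
Proof.
have quotE : (fun h : R => h^-1 *: (((fun s => f (x + s *: v)) \o shift t) (h *: 1)
                                    - f (x + t *: v)))
           = (fun h : R => h^-1 *: ((f \o shift (x + t *: v)) (h *: v) - f (x + t *: v))).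
  apply/funext => h /=; congr (_ *: (f _ - _)).
  by rewrite scaler1 scalerDl addrCA addrA.
have [dfx dfxE] := hf (x + t *: v).
apply: DeriveDef; rewrite /derivable /derive quotE.
- exact: (diff_derivable (v := v) dfx).
- by rewrite -dfxE -deriveE.
Qed.

(* The difference quotients of the convex function s |-> f (x + s (y - x)) on
   (0, 1) are bounded by f y - f x; let s tend to 0 from the right. *)
Lemma convex_gradient_le : convex_fun f -> forall x y, f x + ip (g x) (y - x) <= f y.
Proof.
move=> fcvx x y.
set P := fun s : R => f (x + s *: (y - x)).
have dP := is_derive_line x (y - x) 0; rewrite scale0r addr0 in dP.
set q := fun h : R => h^-1 *: ((P \o shift 0) (h *: 1) - P 0).
have q_cvg : q @ 0^' --> ip (g x) (y - x).
  by rewrite -(derive_val (is_derive := dP)); exact: (ex_derive (is_derive := dP)).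
have q_cvg_right : q @ 0^'+ --> ip (g x) (y - x).
  move=> A /q_cvg /nbhs_ballP [_ /posnumP[e] xe_A].
  by exists e%:num => //= z xe_z /gt_eqF/negbT/xe_A; exact.
rewrite -lerBrDl; apply: (cvgr_to_le q_cvg_right); near=> h.
have h0 : 0 < h by near: h; exact: nbhs_right_gt.
have h1 : h < 1 by near: h; exact: nbhs_right_lt.
have := fcvx y x h; rewrite (ltW h0) (ltW h1) => /(_ isT) fcvx_h.
rewrite /q /P /= scale0r !addr0 scaler1.
have -> : x + h *: (y - x) = h *: y + (1 - h) *: x.
  by rewrite scalerBr scalerBl scale1r addrCA addrA.
by rewrite /GRing.scale /= ler_pdivrMl //; lra.
Unshelve. all: by end_near.
Qed.

Hypothesis hip : inner_product ip.

(* psi t = f (x + t v) - t <g x, v> - t^2 L/2 |v|^2 has a nonpositive derivative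
   on [0, 1] by Cauchy-Schwarz and the Lipschitz bound. *)
Lemma descent_lemma (L : R) : (forall a b, `|g a - g b| <= L * `|a - b|) ->
  forall x y, f y <= f x + ip (g x) (y - x) + L / 2 * `|y - x| ^+ 2.
Proof.
move=> gL x y; set v := y - x; set c := ip (g x) v; set k := L / 2 * `|v| ^+ 2.
set psi := (fun s : R => f (x + s *: v)) - c \*: id - k \*: (id * id : R -> R).
have dpsi t : is_derive t (1 : R) psi (ip (g (x + t *: v)) v - c - k * (2 * t)).
  have dline := is_derive_line x v t.
  by apply: is_derive_eq; rewrite !scaler1 [2]/(1 + 1) mulrDl !mul1r.
have : psi 1 <= psi 0.
  apply: (@ler0_derive1_le_cc _ psi 0 1); last 3 first.
  - by rewrite in_itv /= lexx ler01.
  - by rewrite in_itv /= lexx ler01.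
  - exact: ler01.
  - by move=> t _; exact: (ex_derive (is_derive := dpsi t)).
  - move=> t; rewrite in_itv /= => /andP [t0 t1].
    rewrite derive1E (derive_val (is_derive := dpsi t)) /c /k -(ipBl hip).
    have cs := ip_le_norm hip (g (x + t *: v) - g x) v.
    have := gL (x + t *: v) x; rewrite addrAC subrr add0r normrZ gtr0_norm // => gLt.
    by have := ler_wpM2r (normr_ge0 v) gLt; nra.
  - apply: derivable_within_continuous => t _; exact: (ex_derive (is_derive := dpsi t)).
rewrite /psi /=.
change (f (x + 1 *: v) - c * 1 - k * (1 * 1) <= f (x + 0 *: v) - c * 0 - k * (0 * 0) ->
  f y <= f x + c + k).
by rewrite scale1r scale0r addr0 /v [x + (y - x)]addrC subrK; lra.
Qed.

End Gradient.

Section AffinePerturbation.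
Variables (R : realType) (V : normedModType R) (ip : V -> V -> R).
Hypothesis hip : inner_product ip.
Variables (f : V -> R) (g : V -> V) (w z0 : V).

Lemma gradient_add_affine (gk : V -> V) : is_gradient ip f g ->
  is_gradient ip (fun z => f z + ip w (z - z0)) gk -> forall z, gk z = g z + w.
Proof.
move=> hf hgk z; apply: (ip_ext hip) => u.
have lineE : (fun s : R => f (z + s *: u) + ip w (z + s *: u - z0))
  = (fun s : R => f (z + s *: u)) + cst (ip w (z - z0)) + ip w u \*: id.
  apply/funext => s; change (f (z + s *: u) + ip w (z + s *: u - z0)
    = f (z + s *: u) + ip w (z - z0) + ip w u * s).
  by rewrite -[RHS]addrA addrAC (ipDr hip (z - z0)) (ipZr hip) mulrC.
have dk := is_derive_line hgk z u 0; rewrite lineE in dk.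
have dsum : is_derive (0 : R) (1 : R)
    ((fun s : R => f (z + s *: u)) + cst (ip w (z - z0)) + ip w u \*: id)
    (ip (g (z + 0 *: u)) u + 0 + ip w u *: 1).
  by have dline := is_derive_line hf z u 0; exact: is_deriveD.
move: (derive_val (is_derive := dk)).
rewrite (derive_val (is_derive := dsum)) scale0r !addr0 => <-.
by rewrite (ipDl hip) /GRing.scale /= mulr1.
Qed.

Lemma convex_fun_add_affine :
  convex_fun f -> convex_fun (fun z => f z + ip w (z - z0)).
Proof.
move=> fcvx x y t t01; have := fcvx x y t t01.
have -> : t *: x + (1 - t) *: y - z0 = t *: (x - z0) + (1 - t) *: (y - z0).
  by rewrite !scalerBr addrACA -opprD -scalerDl [t + _]addrC subrK scale1r.
by rewrite (ipDr hip (t *: _)) !(ipZr hip); lra.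
Qed.

End AffinePerturbation.

Lemma ler_of_ler_add_small_mul (R : realFieldType) (a b c : R) :
  0 <= c -> (forall t, 0 < t < 1 -> a <= b + t * c) -> a <= b.
Proof.
move=> c0 abc; apply/ler_addgt0Pr => e e0.
have d0 : 0 < e + c + 1 by lra.
have t0 : 0 < e / (e + c + 1) by rewrite divr_gt0.
have t1 : e / (e + c + 1) < 1 by rewrite ltr_pdivrMr // mul1r; lra.
have tc : e / (e + c + 1) * c <= e by rewrite mulrAC ler_pdivrMr //; nra.
by have := abc _ (andb_true_intro (conj t0 t1)); lra.
Qed.

Section Prox.
Variables (R : realType) (V : normedModType R) (ip : V -> V -> R).
Hypothesis hip : inner_product ip.
Variables (G : V -> \bar R) (tau : R) (v p : V).
Hypotheses (htau : 0 < tau) (hp : is_prox tau G v p).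

Lemma prox_fin_num : proper_efun G -> G p \is a fin_num.
Proof.
case=> Gn [z0 Gz0]; apply/fin_numP; split; first exact: Gn.
apply/negP => /eqP Gp; have := hp z0.
rewrite Gp gt0_muley ?lte_fin // addye // leye_eq => /eqP.
by have := Gn z0; case: (G z0) Gz0 => [r| |] //= _ _; rewrite -EFinM -EFinD.
Qed.

(* Compare with the convex combination t z + (1 - t) p and let t tend to 0. *)
Lemma prox_variational_ineq z : convex_efun G -> proper_efun G ->
  G z \is a fin_num ->
  tau * fine (G p) + ip (v - p) (z - p) <= tau * fine (G z).
Proof.
move=> [Gn Gcvx] Gp fz; have fp := prox_fin_num Gp.
set gp := fine (G p); set gz := fine (G z).
apply: (@ler_of_ler_add_small_mul _ _ _ (2^-1 * `|z - p| ^+ 2)).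
  by rewrite mulr_ge0 // ?invr_ge0 // sqr_ge0.
move=> t /andP [t0 t1]; set q := t *: z + (1 - t) *: p.
have Gq : (G q <= (t * gz + (1 - t) * gp)%:E)%E.
  by have := Gcvx z p t; rewrite t0 t1 -(fineK fz) -(fineK fp) -!EFinM -EFinD; exact.
have fq : G q \is a fin_num.
  by apply/fin_numP; split; [exact: Gn | apply/negP => /eqP Gq_oo; rewrite Gq_oo in Gq].
move: Gq; rewrite -(fineK fq) lee_fin => Gq.
have := hp q; rewrite -(fineK fq) -(fineK fp) -!EFinM -!EFinD lee_fin.
have -> : q - v = (p - v) + t *: (z - p).
  by rewrite /q scalerBr scalerBl scale1r [t *: z + _]addrCA addrAC.
rewrite (normD_sqr hip (p - v)) normrZ gtr0_norm // (ipZr hip) -/gp => prox_q.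
rewrite -opprB (ipNl hip).
have {}Gq : tau * fine (G q) <= tau * (t * gz + (1 - t) * gp) by rewrite ler_pM2l.
have : t * (tau * gp - ip (p - v) (z - p))
       <= t * (tau * gz + t * (2^-1 * `|z - p| ^+ 2)) by lra.
by rewrite ler_pM2l //; lra.
Qed.

End Prox.

Section ProximalGradient.
Variables (R : realType) (V : normedModType R) (ip : V -> V -> R).
Hypothesis hip : inner_product ip.
Variables (f : V -> R) (g : V -> V) (L : R) (G : V -> \bar R) (tau : R).
Hypotheses (hf : is_gradient ip f g) (gL : forall a b, `|g a - g b| <= L * `|a - b|).
Hypotheses (Gcvx : convex_efun G) (Gp : proper_efun G) (htau : 0 < tau).
Variables (z : nat -> V) (m : nat).
Hypothesis hz : forall j, (j < m)%N -> is_prox tau G (z j - tau *: g (z j)) (z j.+1).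

Lemma prox_grad_fin_num : G (z 0) \is a fin_num ->
  forall j, (j <= m)%N -> G (z j) \is a fin_num.
Proof. by move=> fz0 [|j] // jm; apply: (prox_fin_num htau (hz jm)). Qed.

Lemma prox_grad_decrease j : (j < m)%N -> G (z j) \is a fin_num ->
  tau * (f (z j.+1) + fine (G (z j.+1)))
  <= tau * (f (z j) + fine (G (z j))) - (2 - tau * L) / 2 * `|z j.+1 - z j| ^+ 2.
Proof.
move=> jm fzj; set D := z j.+1 - z j.
have prox := prox_variational_ineq hip htau (hz jm) Gcvx Gp fzj.
have ipE : ip (z j - tau *: g (z j) - z j.+1) (z j - z j.+1)
          = `|D| ^+ 2 + tau * ip (g (z j)) D.
  have -> : z j - tau *: g (z j) - z j.+1 = - (D + tau *: g (z j)).
    by rewrite /D opprD opprB addrAC addrC.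
  have -> : z j - z j.+1 = - D by rewrite /D opprB.
  by rewrite (ipNl hip) (ipNr hip) opprK (ipDl hip) (ipZl hip) (ipxx hip).
rewrite ipE in prox.
have desc := descent_lemma hf hip gL (z j) (z j.+1); rewrite -/D in desc.
have : tau * f (z j.+1) <= tau * (f (z j) + ip (g (z j)) D + L / 2 * `|D| ^+ 2).
  by rewrite ler_pM2l.
lra.
Qed.

Lemma prox_grad_total_decrease : G (z 0) \is a fin_num ->
  tau * (f (z m) + fine (G (z m)))
  <= tau * (f (z 0) + fine (G (z 0)))
     - (2 - tau * L) / 2 * \sum_(j < m) `|z j.+1 - z j| ^+ 2.
Proof.
move=> fz0; suff decr n : (n <= m)%N ->
    tau * (f (z n) + fine (G (z n))) <= tau * (f (z 0) + fine (G (z 0)))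
      - (2 - tau * L) / 2 * \sum_(j < n) `|z j.+1 - z j| ^+ 2 by exact: decr.
elim: n => [|n IH] nm; first by rewrite big_ord0 mulr0 subr0.
rewrite big_ord_recr /=.
have := prox_grad_decrease nm (prox_grad_fin_num fz0 (ltnW nm)).
by have := IH (ltnW nm); lra.
Qed.

End ProximalGradient.

Lemma subdiff_sum_le (R : realType) (V : normedModType R) (ip : V -> V -> R)
    (hip : inner_product ip) (f : V -> R) (g : V -> V) (G : V -> \bar R) (x y s : V) :
  is_gradient ip f g -> convex_fun f -> subdiff ip G x s -> G y \is a fin_num ->
  f x + fine (G x) + ip (g x + s) (y - x) <= f y + fine (G y).
Proof.
move=> hf fcvx [fx Gs] fy; have := Gs y.
rewrite -(fineK fx) -(fineK fy) -EFinD lee_fin (ipDl hip) => Gsy.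
by have := convex_gradient_le hf fcvx x y; lra.
Qed.

Unset Implicit Arguments.
Theorem mainTheorem2 (R : realType)
  (X : completeNormedModType R) (ipX : X -> X -> R)
  (XH : completeNormedModType R) (ipXH : XH -> XH -> R)
  (hX : inner_product ipX) (hXH : inner_product ipXH)
  (Rop : {linear X -> XH}) (Pop : {linear XH -> X})
  (hRc : continuous Rop) (hPc : continuous Pop)
  (mu : R) (hmu : 0 < mu)
  (hadj : is_adjoint ipX ipXH Rop (fun z => mu *: Pop z))
  (F : X -> R) (gradF : X -> X) (hF : is_gradient ipX F gradF)
  (G : X -> \bar R) (hGc : convex_efun G) (hGp : proper_efun G)
  (hGl : lower_semicontinuous G)
  (xk : X)
  (FH : XH -> R) (gradFH : XH -> XH) (hFH : is_gradient ipXH FH gradFH)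
  (hFHc : convex_fun FH)
  (LH : R) (hLH : forall a b, `|gradFH a - gradFH b| <= LH * `|a - b|)
  (GHk : XH -> \bar R) (hGHc : convex_efun GHk) (hGHp : proper_efun GHk)
  (hGHl : lower_semicontinuous GHk)
  (tauH : R) (htau : 0 < tauH) (heps : 0 < 2 - tauH * LH)
  (zeta : nat -> XH)
  (hcoh : forall g, subdiff ipX G xk g -> subdiff ipXH GHk (zeta 0%N) (Rop g))
  (gradFHk : XH -> XH)
  (hFHk : is_gradient ipXH
            (fun z => FH z + ipXH (Rop (gradF xk) - gradFH (zeta 0%N)) (z - zeta 0%N))
            gradFHk)
  (m : nat)
  (hzeta : forall j, (j < m)%N ->
     is_prox tauH GHk (zeta j - tauH *: gradFHk (zeta j)) (zeta j.+1)) :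
  let eps := 2 - tauH * LH in
  let d := Pop (zeta m - zeta 0%N) in
  let rhs := - (eps / (2 * mu * tauH)) * \sum_(j < m) `|zeta j.+1 - zeta j| ^+ 2 in
  (ereal_sup [set (ipX (g + gradF xk) d)%:E | g in subdiff ipX G xk] <= rhs%:E)%E
  /\ rhs <= 0.
Proof.
move=> eps d rhs; pose S := \sum_(j < m) `|zeta j.+1 - zeta j| ^+ 2.
have S0 : 0 <= S by apply: sumr_ge0 => j _; exact: sqr_ge0.
have muTau : 0 < mu * tauH by rewrite mulr_gt0.
have rhsE : rhs = - (eps / 2 * S) / (mu * tauH).
  by rewrite /rhs -/S; field; rewrite !gt_eqF // -mulrA mulr_gt0.
have epsS : 0 <= eps / 2 * S by rewrite mulr_ge0 // divr_ge0 // ltW.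
split; last by rewrite rhsE mulNr oppr_le0 divr_ge0 // ltW.
apply: ge_ereal_sup => _ [g Gg <-]; rewrite lee_fin.
set z0 := zeta 0%N; set w := Rop (gradF xk) - gradFH z0.
have gradFHkE := gradient_add_affine hXH hFH hFHk.
have gkL a b : `|gradFHk a - gradFHk b| <= LH * `|a - b|.
  by rewrite !gradFHkE opprD addrACA subrr addr0.
have [fz0 _] := hcoh g Gg.
have decrease := prox_grad_total_decrease hXH hFHk gkL hGHc hGHp htau hzeta fz0.
have lower := subdiff_sum_le hXH hFHk (convex_fun_add_affine hXH w z0 hFHc)
  (hcoh g Gg) (prox_grad_fin_num hGHp htau hzeta fz0 (leqnn m)).
have gradE : gradFHk z0 + Rop g = Rop (g + gradF xk).
  by rewrite gradFHkE /w [gradFH z0 + _]addrC subrK linearD addrC.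
rewrite gradE hadj (ipZr hX) -/d in lower.
rewrite -(ler_pM2l htau) in lower.
by rewrite rhsE ler_pdivlMr //; move: decrease lower; rewrite -/S -/eps; lra.
Qed.
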